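(* Let $(V,\|\cdot\|_V)$, $(\mathcal V,\|\cdot\|_{\mathcal V})$, $(W,\|\cdot\|_W)$, $(\mathcal W,\|\cdot\|_{\mathcal W})$ be normed real vector spaces with $V\subseteq\mathcal V$ continuously and $W\subseteq\mathcal W$ continuously, and let $\epsilon,\theta\in[0,\infty)$, $\varepsilon,\vartheta\in(0,\infty)$ and $F\colon V\to W$ satisfy for all $v,w\in V$ that $\|F(v)-F(w)\|_W\le\epsilon(1+\|v\|_{\mathcal V}^\varepsilon+\|w\|_{\mathcal V}^\varepsilon)\|v-w\|_{\mathcal V}$, $\vartheta=2\varepsilon$, and $$\theta=\max\Big\{3\epsilon^2\Big[\sup_{u\in W\setminus\{0\}}\tfrac{\|u\|_{\mathcal W}^2}{\|u\|_W^2}\Big]\Big[1+\sup_{u\in V\setminus\{0\}}\tfrac{\|u\|_{\mathcal V}^{2\varepsilon}}{\|u\|_V^{2\varepsilon}}\Big](1+2^{\max\{2\varepsilon-1,0\}}),\ (8\epsilon^2+2\|F(0)\|_W^2)\max\Big\{1,\sup_{u\in V\setminus\{0\}}\tfrac{\|u\|_{\mathcal V}^{2+2\varepsilon}}{\|u\|_V^{2+2\varepsilon}}\Big\}\Big\}.$$ Then for all $v,w\in V$ it holds that $\|F(v)\|_W^2\le\theta\max\{1,\|v\|_V^{2+\vartheta}\}$ and $$\|F(v)-F(w)\|_{\mathcal W}^2\le\theta\max\{1,\|v\|_V^\vartheta\}\|v-w\|_{\mathcal V}^2+\theta\|v-w\|_{\mathcal V}^{2+\vartheta}.$$ *)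

From HB Require Import structures.
From mathcomp Require Import all_boot all_order all_algebra.
From mathcomp Require Import all_classical all_reals all_analysis.
Set Implicit Arguments. Unset Strict Implicit. Unset Printing Implicit Defensive.
Import Order.TTheory GRing.Theory Num.Theory.
Import numFieldNormedType.Exports.
Local Open Scope classical_set_scope.
Local Open Scope ring_scope.

(* For a (continuous, linear) inclusion i : X -> Y of normed spaces,
   emb_sup i p = sup_{u in X \ {0}} ||i u||_Y^p / ||u||_X^p
   (real supremum; for X = {0} the set is empty and mathcomp's sup gives 0). *)
Definition emb_sup {R : realType} {X Y : normedModType R} (i : X -> Y) (p : R) : R :=
  sup [set (`|i u| `^ p) / (`|u| `^ p) | u in [set u : X | u != 0]].

From HB Require Import structures.
From mathcomp Require Import all_boot all_order all_algebra.
From mathcomp Require Import all_classical all_reals all_analysis.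
From mathcomp Require Import ring lra.
Import Order.TTheory GRing.Theory Num.Theory.
Import numFieldNormedType.Exports.
Local Open Scope classical_set_scope.
Local Open Scope ring_scope.

(* Squaring the growth condition at w = 0 bounds |F v|^2 by a multiple of
   max(1, |v|^(2+2 veps)), and squaring it at general v, w bounds the increment
   by (1 + |v|^(2 veps) + |w|^(2 veps)) |v - w|^2.  The factor |w|^(2 veps) is
   traded for |v|^(2 veps) + |v - w|^(2 veps) through
   (a + d)^q <= 2^max(q-1,0) (a^q + d^q), and norms are moved between the
   spaces by the embedding constants emb_sup, which are finite because a
   continuous linear map is bounded. *)

Section PowRSum.
Context {R : realType}.
Implicit Types a d q : R.

Lemma powRD_le_subadd a d q : 0 < q -> q <= 1 -> 0 <= a -> 0 <= d ->
  (a + d) `^ q <= a `^ q + d `^ q.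
Proof.
move=> q_gt0 q_le1 a_ge0 d_ge0.
have [->|s_neq0] := eqVneq (a + d) 0.
  by rewrite powR0 ?gt_eqF // addr_ge0 ?powR_ge0.
have s_gt0 : 0 < a + d by rewrite lt_neqAle eq_sym s_neq0 addr_ge0.
(* t <= t^q on [0, 1] when q <= 1, and the two fractions below sum to 1 *)
have frac_le x : 0 <= x -> x <= a + d -> x / (a + d) <= (x / (a + d)) `^ q.
  move=> x_ge0 x_le; have [->|x_neq0] := eqVneq x 0; first by rewrite mul0r powR0 ?gt_eqF.
  apply: ger1_powR q_le1; rewrite ler_pdivrMr // mul1r x_le andbT.
  by rewrite divr_gt0 // lt_neqAle eq_sym x_neq0.
have split_pow x : 0 <= x -> x `^ q = (x / (a + d)) `^ q * (a + d) `^ q.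
  by move=> x_ge0; rewrite -powRM ?divr_ge0 ?(ltW s_gt0) // divfK.
rewrite (split_pow a) // (split_pow d) // -mulrDl.
rewrite -{1}(mul1r ((a + d) `^ q)) ler_wpM2r ?powR_ge0 //.
rewrite -[1](divff s_neq0) mulrDl.
by apply: lerD; apply: frac_le => //; lra.
Qed.

Lemma powRD_le_convex a d q : 1 <= q -> 0 <= a -> 0 <= d ->
  (a + d) `^ q <= 2 `^ (q - 1) * (a `^ q + d `^ q).
Proof.
move=> q_ge1 a_ge0 d_ge0.
have half_convex : (2^-1 * a + 2^-1 * d) `^ q <= 2^-1 * a `^ q + 2^-1 * d `^ q.
  rewrite {2 4}(_ : 2^-1 = 1 - 2^-1); last by rewrite {2}(splitr 1) div1r addrK.
  by apply: (convex_powR q_ge1 (Itv01 _ _)) => //=;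
    rewrite ?inE/= ?in_itv/= ?a_ge0 ?d_ge0// ?invr_ge0// invf_le1 ?ler1n.
have -> : a + d = 2 * (2^-1 * a + 2^-1 * d) by rewrite mulrDr !mulrA divff ?mul1r.
rewrite powRM ?addr_ge0 ?mulr_ge0 ?invr_ge0 //.
have -> : 2 `^ (q - 1) = 2 `^ q * 2^-1 :> R.
  by rewrite powRD ?pnatr_eq0 ?implybT // powRN powRr1.
by rewrite -mulrA ler_wpM2l ?powR_ge0 // mulrDr.
Qed.

Lemma powRD_le a d q : 0 < q -> 0 <= a -> 0 <= d ->
  (a + d) `^ q <= 2 `^ (Num.max (q - 1) 0) * (a `^ q + d `^ q).
Proof.
move=> q_gt0 a_ge0 d_ge0; have [q_le1|q_gt1] := leP q 1.
  by rewrite max_r ?subr_le0 // powRr0 mul1r powRD_le_subadd.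
by rewrite max_l ?subr_ge0 ?(ltW q_gt1) // powRD_le_convex // ltW.
Qed.

Lemma powR2_max_ge1 q : 1 <= 2 `^ (Num.max (q - 1) 0) :> R.
Proof. by rewrite -[leLHS](powRr0 2) ler_powR ?ler1n // le_max lexx orbT. Qed.

Lemma sqr_powR a q : 0 <= a -> (a `^ q) ^+ 2 = a `^ (2 * q).
Proof. by move=> a_ge0; rewrite mulrC powRrM powR_mulrn ?powR_ge0. Qed.

Lemma powR2D a q : 0 <= a -> 0 <= q -> a `^ (2 + q) = a `^ q * a ^+ 2.
Proof.
move=> a_ge0 q_ge0; rewrite addrC powRD ?powR_mulrn //.
by rewrite gt_eqF ?implybT // ltr_wpDl.
Qed.

End PowRSum.

Lemma sqr_add3_le (R : realFieldType) (x y z : R) :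
  (x + y + z) ^+ 2 <= 3 * (x ^+ 2 + y ^+ 2 + z ^+ 2).
Proof.
by have := sqr_ge0 (x - y); have := sqr_ge0 (y - z); have := sqr_ge0 (x - z); nra.
Qed.

Section EmbeddingConstant.
Context {R : realType} {X Y : normedModType R} (i : {linear X -> Y}).

Lemma emb_sup_ge0 (p : R) : 0 <= emb_sup i p.
Proof.
rewrite /emb_sup; set S := [set _ | _ in _].
have [[[x [u u0 ux]] ub]|noS] := pselect (has_sup S); last by rewrite sup_out.
have Sx : S x by exists u.
by apply: le_trans (ub_le_sup ub Sx); rewrite -ux divr_ge0 ?powR_ge0.
Qed.

Hypothesis i_cont : continuous i.

Lemma emb_sup_has_ubound (p : R) : 0 < p ->
  has_ubound [set (`|i u| `^ p) / (`|u| `^ p) | u in [set u : X | u != 0]].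
Proof.
move=> p_gt0.
have [r r_gt0 ir_le] := pinfty_ex_gt0
  ((linear_boundedP i).1 ((linear_bounded_continuous i).2 i_cont)).
exists (r `^ p) => _ [u /= u0 <-].
rewrite ler_pdivrMr ?powR_gt0 ?normr_gt0 // -powRM ?normr_ge0 ?(ltW r_gt0) //.
by apply: ge0_ler_powR; rewrite ?nnegrE ?mulr_ge0 ?normr_ge0 ?(ltW r_gt0) ?(ltW p_gt0).
Qed.

Lemma powR_norm_emb_le (p : R) u : 0 < p -> `|i u| `^ p <= emb_sup i p * `|u| `^ p.
Proof.
move=> p_gt0; have [->|u0] := eqVneq u 0.
  by rewrite linear0 !normr0 powR0 ?gt_eqF // mulr0.
rewrite -ler_pdivrMr ?powR_gt0 ?normr_gt0 //.
by apply: ub_le_sup; [exact: emb_sup_has_ubound | exists u].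
Qed.

Lemma max1_powR_norm_emb_le (p : R) u : 0 < p ->
  Num.max 1 (`|i u| `^ p) <= Num.max 1 (emb_sup i p) * Num.max 1 (`|u| `^ p).
Proof.
move=> p_gt0; have E1 : 1 <= Num.max 1 (emb_sup i p) by rewrite le_max lexx.
have N1 : 1 <= Num.max 1 (`|u| `^ p) by rewrite le_max lexx.
rewrite ge_max; apply/andP; split; first by rewrite -[leLHS]mulr1 ler_pM.
apply: (le_trans (powR_norm_emb_le p u p_gt0)).
by rewrite ler_pM ?emb_sup_ge0 ?powR_ge0 // le_max lexx orbT.
Qed.

Lemma powR_norm_emb_pair_le (q : R) v w : 0 < q ->
  1 + `|i v| `^ q + `|i w| `^ q <=
    (1 + emb_sup i q) * (1 + 2 `^ Num.max (q - 1) 0)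
      * (Num.max 1 (`|v| `^ q) + `|i (v - w)| `^ q).
Proof.
move=> q_gt0; set a := `|i v|; set b := `|i w|; set d := `|i (v - w)|.
set E := emb_sup i q; set c := 2 `^ _; set M := Num.max 1 _; set D := d `^ q.
have E_ge0 : 0 <= E := emb_sup_ge0 q.
have c_ge1 : 1 <= c := powR2_max_ge1 q.
have M_ge1 : 1 <= M by rewrite le_max lexx.
have D_ge0 : 0 <= D := powR_ge0 _ _.
have aM : a `^ q <= E * M.
  apply: le_trans (powR_norm_emb_le q v q_gt0) _.
  by rewrite ler_wpM2l // le_max lexx orbT.
have b_le : b <= a + d.
  rewrite /b /a /d.
  have -> : i w = i v - i (v - w) by rewrite linearB /= opprB addrC subrK.
  by rewrite ler_normB.
have bM : b `^ q <= c * (E * M + D).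
  have [a_ge0 b_ge0 d_ge0] : [/\ 0 <= a, 0 <= b & 0 <= d] by split; apply: normr_ge0.
  apply: le_trans (ge0_ler_powR (ltW q_gt0) _ _ b_le) _; rewrite ?nnegrE ?addr_ge0 //.
  apply: le_trans (powRD_le _ _ _ q_gt0 a_ge0 d_ge0) _.
  by rewrite ler_wpM2l ?powR_ge0 // lerD2r.
have EM0 : 0 <= E * M by rewrite mulr_ge0 //; lra.
have cD : c * D <= (1 + E) * (1 + c) * D.
  by rewrite ler_wpM2r //; nra.
nra.
Qed.

End EmbeddingConstant.

Section GrowthCondition.
Context {R : realType} {V VV W : normedModType R} {iV : {linear V -> VV}}.
Context {F : V -> W} {eps veps : R}.
Hypotheses (eps_ge0 : 0 <= eps) (veps_gt0 : 0 < veps).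
Hypothesis HF : forall v w : V,
  `|F v - F w| <= eps * (1 + `|iV v| `^ veps + `|iV w| `^ veps) * `|iV (v - w)|.

Lemma norm_F_le v : `|F v| <= `|F 0| + eps * (1 + `|iV v| `^ veps) * `|iV v|.
Proof.
have := HF v 0; rewrite subr0 linear0 normr0 powR0 ?gt_eqF // addr0 => HFv0.
by rewrite -[F v](subrK (F 0)) (le_trans (ler_normD _ _)) // addrC lerD2l.
Qed.

Lemma sqr_norm_F_le v : `|F v| ^+ 2 <=
  (8 * eps ^+ 2 + 2 * `|F 0| ^+ 2) * Num.max 1 (`|iV v| `^ (2 + 2 * veps)).
Proof.
set a := `|iV v|; set s := a `^ veps; set A := a `^ _; set M := Num.max 1 A.
have a_ge0 : 0 <= a := normr_ge0 _.
have s_ge0 : 0 <= s := powR_ge0 _ _.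
have M_ge1 : 1 <= M by rewrite le_max lexx.
have AM : A <= M by rewrite le_max lexx orbT.
have a2M : a ^+ 2 <= M.
  rewrite le_max; have [a_le1|a_gt1] := leP a 1; first by rewrite expr_le1 // a_le1.
  rewrite /A -powR_mulrn // ler_powR ?orbT ?ltW //.
  by rewrite ltrDl mulr_gt0.
have sA : s ^+ 2 * a ^+ 2 = A by rewrite sqr_powR // -powR2D // mulr_ge0 // ltW.
have growth : (eps * (1 + s) * a) ^+ 2 <= eps ^+ 2 * (4 * M).
  rewrite !exprMn -mulrA ler_wpM2l ?sqr_ge0 //.
  by have := sqr_ge0 (1 - s); have := sqr_ge0 a; nra.
set X := eps * (1 + s) * a in growth *; set f := `|F 0|.
have X_ge0 : 0 <= X by rewrite !mulr_ge0 ?addr_ge0.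
have sqr_le : `|F v| ^+ 2 <= (f + X) ^+ 2.
  by rewrite lerXn2r ?nnegrE ?addr_ge0 ?normr_ge0 //; apply: norm_F_le.
have fM : f ^+ 2 <= f ^+ 2 * M by rewrite ler_peMr ?sqr_ge0.
by have := sqr_ge0 (f - X); nra.
Qed.

Lemma sqr_norm_FB_le v w : `|F v - F w| ^+ 2 <=
  3 * eps ^+ 2 * (1 + `|iV v| `^ (2 * veps) + `|iV w| `^ (2 * veps))
    * `|iV (v - w)| ^+ 2.
Proof.
apply: le_trans (lerXn2r 2 _ _ (HF v w)) _; rewrite ?nnegrE ?mulr_ge0 ?addr_ge0 //.
rewrite !exprMn -!sqr_powR // ler_wpM2r ?sqr_ge0 // (mulrC 3) -[leRHS]mulrA.
rewrite ler_wpM2l ?sqr_ge0 //.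
by rewrite -[X in 3 * (X + _ + _)](expr1n _ 2) sqr_add3_le.
Qed.

Context {WW : normedModType R} {iW : {linear W -> WW}}.
Hypotheses (iV_cont : continuous iV) (iW_cont : continuous iW).

Lemma sqr_norm_F_emb_le v : `|F v| ^+ 2 <=
  (8 * eps ^+ 2 + 2 * `|F 0| ^+ 2) * Num.max 1 (emb_sup iV (2 + 2 * veps))
    * Num.max 1 (`|v| `^ (2 + 2 * veps)).
Proof.
apply: le_trans (sqr_norm_F_le v) _; rewrite -mulrA ler_wpM2l ?addr_ge0 ?mulr_ge0 ?sqr_ge0 //.
by apply: max1_powR_norm_emb_le; rewrite // addr_gt0 ?mulr_gt0.
Qed.

Lemma sqr_norm_emb_FB_le v w : `|iW (F v - F w)| ^+ 2 <=
  3 * eps ^+ 2 * emb_sup iW 2 * (1 + emb_sup iV (2 * veps))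
    * (1 + 2 `^ Num.max (2 * veps - 1) 0)
    * (Num.max 1 (`|v| `^ (2 * veps)) + `|iV (v - w)| `^ (2 * veps))
    * `|iV (v - w)| ^+ 2.
Proof.
set EW := emb_sup iW 2.
have EW_ge0 : 0 <= EW := emb_sup_ge0 iW 2.
have sqr_iW : `|iW (F v - F w)| ^+ 2 <= EW * `|F v - F w| ^+ 2.
  by rewrite -!powR_mulrn ?normr_ge0 // powR_norm_emb_le.
apply: le_trans sqr_iW _.
apply: le_trans (ler_wpM2l EW_ge0 (sqr_norm_FB_le v w)) _.
have := powR_norm_emb_pair_le iV iV_cont _ v w (mulr_gt0 (ltr0Sn _ 1) veps_gt0).
set d := `|iV (v - w)|; set P := 1 + _ + _ => pair.
set Q := (1 + _) * _ * _ in pair.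
have k_ge0 : 0 <= 3 * eps ^+ 2 * EW by rewrite !mulr_ge0 ?sqr_ge0.
have -> : EW * (3 * eps ^+ 2 * P * d ^+ 2) = 3 * eps ^+ 2 * EW * P * d ^+ 2 by ring.
have -> : 3 * eps ^+ 2 * EW * (1 + emb_sup iV (2 * veps))
    * (1 + 2 `^ Num.max (2 * veps - 1) 0)
    * (Num.max 1 (`|v| `^ (2 * veps)) + d `^ (2 * veps)) * d ^+ 2
    = 3 * eps ^+ 2 * EW * Q * d ^+ 2 by rewrite /Q; ring.
by rewrite ler_wpM2r ?sqr_ge0 // ler_wpM2l.
Qed.

End GrowthCondition.

Theorem lemma2p4 (R : realType) (V VV W WW : normedModType R)
  (iV : {linear V -> VV}) (iW : {linear W -> WW})
  (iV_inj : injective iV) (iV_cont : continuous iV)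
  (iW_inj : injective iW) (iW_cont : continuous iW)
  (eps theta veps vtheta : R) (F : V -> W)
  (eps_ge0 : 0 <= eps) (theta_ge0 : 0 <= theta)
  (veps_gt0 : 0 < veps) (vtheta_gt0 : 0 < vtheta)
  (HF : forall v w : V, `|F v - F w| <=
          eps * (1 + `|iV v| `^ veps + `|iV w| `^ veps) * `|iV (v - w)|)
  (Hvtheta : vtheta = 2 * veps)
  (Htheta : theta = Num.max
     (3 * eps ^+ 2 * emb_sup iW 2 * (1 + emb_sup iV (2 * veps))
        * (1 + 2 `^ (Num.max (2 * veps - 1) 0)))
     ((8 * eps ^+ 2 + 2 * `|F 0| ^+ 2) * Num.max 1 (emb_sup iV (2 + 2 * veps)))) :
  forall v w : V,
    `|F v| ^+ 2 <= theta * Num.max 1 (`|v| `^ (2 + vtheta)) /\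
    `|iW (F v - F w)| ^+ 2 <=
      theta * Num.max 1 (`|v| `^ vtheta) * `|iV (v - w)| ^+ 2
      + theta * `|iV (v - w)| `^ (2 + vtheta).
Proof.
move=> v w; subst vtheta; split.
  apply: le_trans (sqr_norm_F_emb_le eps_ge0 veps_gt0 HF iV_cont v) _.
  by rewrite ler_wpM2r // ?le_max ?ler01 // Htheta le_max lexx orbT.
apply: le_trans (sqr_norm_emb_FB_le eps_ge0 veps_gt0 HF iV_cont iW_cont v w) _.
rewrite (powR2D _ _ (normr_ge0 _) (ltW vtheta_gt0)); set d := `|iV (v - w)|.
set M := Num.max 1 _; set D := d `^ _.
have -> : theta * M * d ^+ 2 + theta * (D * d ^+ 2) = theta * (M + D) * d ^+ 2 by ring.
rewrite ler_wpM2r ?sqr_ge0 // ler_wpM2r ?addr_ge0 ?powR_ge0 ?le_max ?ler01 //.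
by rewrite Htheta le_max lexx.
Qed.
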